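(* Let $G$ be a finite abelian group, $T \subsetneq G$ a non-empty subset, and fix $x \in G$ with $T + x \ne T$. Put $T^{\uparrow} = T + x$, $C^{\uparrow} = T^{\uparrow}\setminus T$, $C^{\downarrow} = T \setminus T^{\uparrow}$ and $A = T \cup T^{\uparrow}$. Let $d \ge 1$ and suppose that $0 \le i_1, \dots, i_m \le d$ are distinct integers. Then $\left(A^d \setminus (C_{i_1,d}\cup\dots\cup C_{i_m,d})\right)^{\dagger m}$ is a hole in $A^{d+m}$.
   Context: For integers $1 \le i \le e$, $C_{i,e} = C^{\downarrow}\times\dots\times C^{\uparrow}\times\dots\times C^{\downarrow} \subset A^e$ ($e$ factors, $C^{\uparrow}$ in the $i$-th factor, $C^{\downarrow}$ elsewhere), and $C_{0,e} = (C^{\downarrow})^e$. A copy of $T$ in $G^e$ is a translate $\mathsf{T}_j + y$ ($y\in G^e$, $1\le j\le e$), where $\mathsf{T}_j$ is the set of points of $G^e$ with $j$-th coordinate in $T$ and other coordinates $0$; a set is $T$-tilable if it is a disjoint union of copies of $T$. A set $X \subset A^e$ is a hole in $A^e$ if $A^e \setminus X$ is $T$-tilable. For $X \subset A^e$, define $X^{\dagger} = (X \times C^{\downarrow}) \cup C_{e+1,e+1} \subset A^{e+1}$, and for $m \ge 1$ let $X^{\dagger m}$ be the result of $m$ consecutive applications of $\dagger$ (each in the dimension of the current ambient set), a subset of $A^{e+m}$. *)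

From HB Require Import structures.
From mathcomp Require Import all_boot all_order all_algebra.
Set Implicit Arguments. Unset Strict Implicit. Unset Printing Implicit Defensive.
Import GRing.Theory.
Local Open Scope ring_scope.

Section Tiling.
Variables (G : finZmodType) (T : {set G}) (x : G).

Definition point (e : nat) := {ffun 'I_e -> G}.

Definition Tup : {set G} := [set t + x | t in T].
Definition Cup : {set G} := Tup :\: T.
Definition Cdown : {set G} := T :\: Tup.
Definition Aset : {set G} := T :|: Tup.

Definition Apow (e : nat) : {set point e} := [set f : point e | [forall k, f k \in Aset]].

(* C_{i,e}, for 0 <= i <= e: C^up in the i-th factor (1-based), C^down elsewhere;
   for i = 0 all factors are C^down. *)
Definition Cie (i e : nat) : {set point e} :=
  [set f : point e | [forall k : 'I_e, f k \in (if (k.+1 == i)%N then Cup else Cdown)]].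

Definition Tj (e : nat) (j : 'I_e) : {set point e} :=
  [set f : point e | (f j \in T) && [forall k, (k != j) ==> (f k == 0)]].

Definition is_copy (e : nat) (B : {set point e}) : Prop :=
  exists (j : 'I_e) (y : point e), B = [set ([ffun k => z k + y k] : point e) | z : point e in Tj j].

Definition tilable (e : nat) (S : {set point e}) : Prop :=
  exists P : {set {set point e}},
    (forall B, B \in P -> is_copy B) /\ trivIset P /\ cover P = S.

Definition hole (e : nat) (X : {set point e}) : Prop :=
  X \subset Apow e /\ tilable (Apow e :\: X).

(* dagger: X subset A^e  |->  (X x C^down) u C_{e+1,e+1} subset A^{e+1} *)
Definition restr (e : nat) (f : point e.+1) : point e :=
  [ffun k : 'I_e => f (widen_ord (leqnSn e) k)].

Definition dagger (e : nat) (X : {set point e}) : {set point e.+1} :=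
  [set f : point e.+1 | ((restr f \in X) && (f ord_max \in Cdown)) || (f \in Cie e.+1 e.+1)].

Fixpoint dagger_iter (e m : nat) : {set point e} -> {set point (m + e)} :=
  match m return {set point e} -> {set point (m + e)} with
  | 0 => fun X => X
  | m'.+1 => fun X => dagger (dagger_iter m' X)
  end.

End Tiling.

From mathcomp Require Import all_boot all_order all_algebra.
Set Implicit Arguments. Unset Strict Implicit. Unset Printing Implicit Defensive.
Import GRing.Theory.
Local Open Scope ring_scope.

(* All tilings are built from fibres: a set of points whose j-th coordinate
   ranges over a translate T + c, the other coordinates being subject to a
   condition that does not involve the j-th one, is a disjoint union of copies
   of T.  Split a point of G^(e+1) as (g, a), a the last coordinate; then
   X^dagger = X * Cdown u C_{0,e} * Cup.  If X is contained in
   Y = A^e \ C_{i,e} and Y \ X is tilable, the complement of X^dagger is the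
   disjoint union of the complement of Y^dagger and (Y \ X) * Cdown, so it
   suffices that Y^dagger be a hole.  Using A = Cdown u Tup and
   Tup = Cup u (T n Tup), the complement of Y^dagger is cut into two (i = 0)
   or four (i > 0) fibres, in the latter case along the i-th coordinate.
   The theorem follows by induction on the list of indices: dagger commutes
   with removing C_{i,.}, and C_{i,d} stays inside the current hole because
   the sets C_{i,d} are pairwise disjoint. *)

Section Tilings.
Variables (G : finZmodType) (T : {set G}).

Local Notation tilable := (tilable T).

Lemma tilable_set0 e : tilable (set0 : {set point G e}).
Proof.
exists set0; split=> [B|]; first by rewrite inE.
split; first by apply/trivIsetP => A B; rewrite inE.
by rewrite /cover big_set0.
Qed.

Lemma tilableU e (S1 S2 : {set point G e}) :
  [disjoint S1 & S2] -> tilable S1 -> tilable S2 -> tilable (S1 :|: S2).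
Proof.
move=> S12 [P1 [cP1 [tP1 eP1]]] [P2 [cP2 [tP2 eP2]]].
exists (P1 :|: P2); split=> [B|]; first by rewrite inE => /orP[]; [exact: cP1 | exact: cP2].
split; first by apply: trivIsetU; rewrite // eP1 eP2.
by rewrite /cover bigcup_setU -/(cover P1) -/(cover P2) eP1 eP2.
Qed.

Lemma tilable_exact_cover e (Ss : seq {set point G e}) (S : {set point G e}) :
  (forall B, B \in Ss -> tilable B) ->
  (forall f : point G e, count (fun B : {set point G e} => f \in B) Ss = (f \in S)) ->
  tilable S.
Proof.
elim: Ss S => [|B Ss IH] S tSs cntS.
  suff -> : S = set0 by exact: tilable_set0.
  by apply/setP => f; move: (cntS f); rewrite inE /=; case: (f \in S).
have BS : B \subset S.
  by apply/subsetP => f fB; move: (cntS f); rewrite /= fB; case: (f \in S).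
rewrite -(setID S B) (setIidPr BS); apply: tilableU.
- by apply/pred0P => f /=; rewrite !inE; case: (f \in B).
- by apply: tSs; rewrite mem_head.
- apply: IH => [B' B'Ss|f]; first by apply: tSs; rewrite inE B'Ss orbT.
  by move: (cntS f); rewrite /= !inE; case: (f \in B); case: (f \in S) => //= -[].
Qed.

Lemma translate0 : [set t + 0 | t in T] = T.
Proof. by rewrite (eq_imset _ (@addr0 G)) imset_id. Qed.

Definition line e (j : 'I_e) (y : point G e) (V : {set G}) : {set point G e} :=
  [set f : point G e | (f j \in V) && [forall k, (k != j) ==> (f k == y k)]].

Lemma line_copy e (j : 'I_e) (y : point G e) (c : G) :
  is_copy T (line j y [set t + c | t in T]).
Proof.
exists j, [ffun k => if k == j then c else y k]; apply/setP => f; rewrite inE.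
apply/idP/imsetP => [/andP[/imsetP[t tT fjt] /forallP yf]|[z]].
  exists [ffun k => if k == j then t else 0].
    rewrite inE ffunE eqxx tT; apply/forallP => k; rewrite ffunE.
    by case: (k == j); rewrite /= ?eqxx.
  apply/ffunP => k; rewrite !ffunE; case: eqP => [->|/eqP kj]; first by rewrite fjt.
  by rewrite add0r; apply/eqP; move/implyP: (yf k); apply.
rewrite inE => /andP[zT /forallP z0] ->; rewrite !ffunE eqxx.
apply/andP; split; first by apply/imsetP; exists (z j).
apply/forallP => k; apply/implyP => kj; rewrite !ffunE (negbTE kj).
by move/implyP: (z0 k) => /(_ kj) /eqP ->; rewrite add0r.
Qed.

Lemma tilable_fiber e (j : 'I_e) (c : G) (P : pred (point G e)) :
    (forall f g : point G e, (forall k, k != j -> f k = g k) -> P f = P g) ->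
  tilable [set f : point G e | (f j \in [set t + c | t in T]) && P f].
Proof.
move=> Poffj; set V := [set t + c | t in T].
exists [set line j y V | y in [set y : point G e | (y j == 0) && P y]].
split=> [B /imsetP[y _ ->]|]; first exact: line_copy.
split.
  apply/trivIsetP => _ _ /imsetP[y1 + ->] /imsetP[y2 + ->]; rewrite !inE.
  move=> /andP[/eqP y1j _] /andP[/eqP y2j _] y12.
  apply/pred0P => f /=; rewrite !inE; apply/negP.
  move=> /andP[/andP[_ /forallP f1] /andP[_ /forallP f2]].
  move/negP: y12; apply; apply/eqP; congr line; apply/ffunP => k.
  case: (eqVneq k j) => [->|kj]; first by rewrite y1j y2j.
  by move/implyP: (f1 k) => /(_ kj) /eqP <-; move/implyP: (f2 k) => /(_ kj) /eqP.
rewrite cover_imset; apply/setP => f; rewrite inE; apply/bigcupP/andP.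
  case=> y; rewrite !inE => /andP[_ Py] /andP[fV /forallP yf]; split=> //.
  by rewrite (Poffj f y) // => k kj; apply/eqP; move/implyP: (yf k); apply.
case=> fV Pf; exists [ffun k => if k == j then 0 else f k].
  rewrite inE ffunE !eqxx (Poffj _ f) // => k kj.
  by rewrite ffunE (negbTE kj).
rewrite inE fV; apply/forallP => k; apply/implyP => kj.
by rewrite ffunE (negbTE kj).
Qed.

Lemma widen_neq_max e (k : 'I_e) : widen_ord (leqnSn e) k != ord_max.
Proof. by rewrite -val_eqE /= neq_ltn ltn_ord. Qed.

Lemma lift_max e (k : 'I_e) : lift ord_max k = widen_ord (leqnSn e) k.
Proof. by apply/val_inj; rewrite /= /bump leqNgt ltn_ord. Qed.

Lemma forall_ord_max e (P : pred 'I_e.+1) :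
  [forall k, P k] = [forall k : 'I_e, P (widen_ord (leqnSn e) k)] && P ord_max.
Proof.
apply/forallP/andP => [Pk|[/forallP Pk Pm] k]; first by split=> //; apply/forallP.
by case: (unliftP ord_max k) => [i ->|->//]; rewrite lift_max.
Qed.

Lemma restrE e (f : point G e.+1) k : restr f k = f (widen_ord (leqnSn e) k).
Proof. by rewrite ffunE. Qed.

Definition prodset e (Q : {set point G e}) (W : {set G}) : {set point G e.+1} :=
  [set f | (restr f \in Q) && (f ord_max \in W)].

Lemma in_prodset e (Q : {set point G e}) (W : {set G}) f :
  (f \in prodset Q W) = (restr f \in Q) && (f ord_max \in W).
Proof. by rewrite inE. Qed.

Lemma tilable_prodset_translate e (Q : {set point G e}) (c : G) :
  tilable (prodset Q [set t + c | t in T]).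
Proof.
set V := [set t + c | t in T].
have -> : prodset Q V = [set f : point G e.+1 | (f ord_max \in V) && (restr f \in Q)].
  by apply/setP => f; rewrite !inE andbC.
apply: tilable_fiber => f g fg; congr (_ \in Q); apply/ffunP => k.
by rewrite !restrE fg // widen_neq_max.
Qed.

Definition extend e (y : point G e) (c : G) : point G e.+1 :=
  [ffun k => if unlift ord_max k is Some k' then y k' else c].

Lemma extend_max e (y : point G e) c : extend y c ord_max = c.
Proof. by rewrite ffunE unlift_none. Qed.

Lemma mem_translate e (S : {set point G e}) (y f : point G e) :
  (f \in [set [ffun k => z k + y k] | z : point G e in S]) =
  ([ffun k => f k - y k] \in S).
Proof.
apply/imsetP/idP => [[z zS ->]|fyS].
  suff -> : [ffun k => [ffun k => z k + y k] k - y k] = z by [].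
  by apply/ffunP => k; rewrite !ffunE addrK.
by exists [ffun k => f k - y k] => //; apply/ffunP => k; rewrite !ffunE subrK.
Qed.

Lemma Tj_widen e (j : 'I_e) (f : point G e.+1) :
  (f \in Tj T (widen_ord (leqnSn e) j)) = (restr f \in Tj T j) && (f ord_max == 0).
Proof.
rewrite !inE restrE; apply/andP/andP => [[fjT /forallP f0]|[/andP[fjT /forallP f0] fm0]].
  split; last by move/implyP: (f0 ord_max); rewrite eq_sym widen_neq_max; apply.
  rewrite fjT; apply/forallP => k; apply/implyP => kj; rewrite restrE.
  by move/implyP: (f0 (widen_ord (leqnSn e) k)); apply; rewrite -val_eqE.
split=> //; apply/forallP => k; apply/implyP.
case: (unliftP ord_max k) => [i ->|->//]; rewrite lift_max => kj.
by move/implyP: (f0 i); rewrite restrE; apply; apply: contra kj => /eqP ->.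
Qed.

Lemma prodset_copy e (B : {set point G e}) (c : G) :
  is_copy T B -> is_copy T (prodset B [set c]).
Proof.
case=> j [y ->]; exists (widen_ord (leqnSn e) j), (extend y c).
apply/setP => f; rewrite !inE !mem_translate Tj_widen ffunE extend_max subr_eq0.
suff -> : restr [ffun k => f k - extend y c k] = [ffun k => restr f k - y k] by [].
by apply/ffunP => k; rewrite !ffunE -lift_max liftK.
Qed.

Lemma tilable_prodset e (Q : {set point G e}) (W : {set G}) :
  tilable Q -> tilable (prodset Q W).
Proof.
case=> P [cP [tP eP]].
exists [set prodset B [set c] | B in P, c in W]; split.
  by move=> _ /imset2P[B c BP _ ->]; apply/prodset_copy/cP.
split.
  apply/trivIsetP => _ _ /imset2P[B1 c1 B1P _ ->] /imset2P[B2 c2 B2P _ ->] neq.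
  apply/pred0P => f /=; rewrite !inE; apply/negP.
  move=> /andP[/andP[fB1 /eqP fc1] /andP[fB2 /eqP fc2]].
  move/negP: neq; apply; apply/eqP; rewrite -fc1 -fc2; congr prodset.
  case: (eqVneq B1 B2) => // B12; move/trivIsetP: tP => /(_ B1 B2 B1P B2P B12).
  by move/pred0P => /(_ (restr f)) /=; rewrite fB1 fB2.
apply/setP => f; rewrite /cover inE; apply/bigcupP/andP.
  case=> _ /imset2P[B c BP cW ->]; rewrite !inE => /andP[fB /eqP ->].
  by split=> //; rewrite -eP; apply/bigcupP; exists B.
rewrite -eP => -[/bigcupP[B BP fB] fW].
exists (prodset B [set f ord_max]); first by apply/imset2P; exists B (f ord_max).
by rewrite !inE fB eqxx.
Qed.

Lemma tilable_prodset_T e (Q : {set point G e}) : tilable (prodset Q T).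
Proof. by have := tilable_prodset_translate Q 0; rewrite translate0. Qed.

End Tilings.

Section Holes.
Variables (G : finZmodType) (T : {set G}) (x : G).

Local Notation Tu := (Tup T x).
Local Notation Cu := (Cup T x).
Local Notation Cd := (Cdown T x).
Local Notation A := (Aset T x).
Local Notation tilable := (tilable T).
Local Notation hole := (hole T x).

Lemma Apow_S e : Apow T x e.+1 = prodset (Apow T x e) A.
Proof.
apply/setP => f; rewrite !inE forall_ord_max.
congr (_ && _); last by rewrite inE.
by apply/eq_forallb => k; rewrite ffunE.
Qed.

Lemma Cie_S i e : (i <= e)%N -> Cie T x i e.+1 = prodset (Cie T x i e) Cd.
Proof.
move=> ie; apply/setP => f; rewrite !inE forall_ord_max.
have -> : (e.+1 == i) = false by apply/negbTE; rewrite neq_ltn ltnS ie orbT.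
congr (_ && _); last by rewrite inE.
by apply/eq_forallb => k; rewrite ffunE.
Qed.

Lemma Cie_top e : Cie T x e.+1 e.+1 = prodset (Cie T x 0 e) Cu.
Proof.
apply/setP => f; rewrite !inE forall_ord_max eqxx.
congr (_ && _); last by rewrite inE.
by apply/eq_forallb => k; rewrite ffunE /= eqSS (ltn_eqF (ltn_ord k)).
Qed.

Lemma daggerE e (X : {set point G e}) :
  dagger T x X = prodset X Cd :|: prodset (Cie T x 0 e) Cu.
Proof. by rewrite -Cie_top; apply/setP => f; rewrite !inE. Qed.

Lemma Cie_sub_Apow i e : Cie T x i e \subset Apow T x e.
Proof.
apply/subsetP => g; rewrite !inE => /forallP gC; apply/forallP => k.
by move: (gC k); case: ifP; rewrite !inE => _ /andP[_ ->]; rewrite ?orbT.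
Qed.

Lemma dagger_sub_Apow e (X : {set point G e}) :
  X \subset Apow T x e -> dagger T x X \subset Apow T x e.+1.
Proof.
move=> XA; apply/subsetP => f; rewrite daggerE Apow_S in_setU !in_prodset.
case/orP=> /andP[fX].
  by rewrite (subsetP XA _ fX) /Cdown /Aset !inE => /andP[_ ->].
by rewrite (subsetP (Cie_sub_Apow _ _) _ fX) /Cup /Aset !inE => /andP[_ ->]; rewrite orbT.
Qed.

Lemma hole_dagger_Cie0 e : hole (dagger T x (Apow T x e :\: Cie T x 0 e)).
Proof.
split; first by apply: dagger_sub_Apow; apply: subsetDl.
pose pieces := [:: prodset (Apow T x e :\: Cie T x 0 e) Tu; prodset (Cie T x 0 e) T].
apply: (@tilable_exact_cover _ _ _ pieces) => [B|f].
  rewrite !inE => /orP[]/eqP->; first exact: tilable_prodset_translate.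
  exact: tilable_prodset_T.
rewrite /= daggerE Apow_S in_setD in_setU !in_prodset in_setD.
move: (restr f) (f ord_max) => g a; rewrite /Cup /Cdown /Aset !in_setD !in_setU.
case: (boolP (g \in Cie T x 0 e)) => [/(subsetP (Cie_sub_Apow _ _)) ->|_] /=;
  case: (g \in Apow T x e); case: (a \in T); by case: (a \in Tu).
Qed.

Definition cross e (j : 'I_e) (V : {set G}) : {set point G e} :=
  [set g : point G e | [forall k, g k \in (if k == j then V else Cd)]].

Lemma mem_cross e (j : 'I_e) (V : {set G}) (g : point G e) :
  (g \in cross j V) = (g j \in V) && (g \in cross j setT).
Proof.
rewrite !inE; apply/forallP/andP => [gV|[gjV /forallP gT] k].
  by split; [move: (gV j); rewrite eqxx | apply/forallP => k; case: eqP (gV k); rewrite inE].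
by case: eqP (gT k) => [->|].
Qed.

Lemma Cie0_cross e (j : 'I_e) : Cie T x 0 e = cross j Cd.
Proof. by apply/setP => g; rewrite !inE; apply/eq_forallb => k; case: (k == j). Qed.

Lemma CieS_cross e (j : 'I_e) : Cie T x j.+1 e = cross j Cu.
Proof. by apply/setP => g; rewrite !inE; apply/eq_forallb => k; rewrite eqSS val_eqE. Qed.

Lemma Apow_cross e (j : 'I_e) (g : point G e) :
  g \in cross j setT -> (g \in Apow T x e) = (g j \in A).
Proof.
rewrite !inE => /forallP gC; apply/forallP/idP => [/(_ j)|gjA k]; first by rewrite inE.
by case: eqP (gC k) => [->|_]; rewrite /Aset !inE // => /andP[_ ->].
Qed.

Lemma tilable_cross e (j : 'I_e) (c : G) : tilable (cross j [set t + c | t in T]).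
Proof.
set V := [set t + c | t in T].
have -> : cross j V = [set g : point G e | (g j \in V) && (g \in cross j setT)].
  by apply/setP => g; rewrite [RHS]in_set -mem_cross.
apply: (@tilable_fiber _ T _ j c (fun g => g \in cross j setT)) => f g fg.
rewrite !inE; apply/eq_forallb => k.
by case: eqP => [_|/eqP kj]; rewrite ?inE // fg.
Qed.

Lemma hole_dagger_CieS e (j : 'I_e) :
  hole (dagger T x (Apow T x e :\: Cie T x j.+1 e)).
Proof.
split; first by apply: dagger_sub_Apow; apply: subsetDl.
pose pieces := [:: prodset (Apow T x e :\: cross j A) Tu; prodset (cross j Cu) T;
                   prodset (cross j Tu) Cu; prodset (cross j T) (T :&: Tu)].
have tilable_cross_T : tilable (cross j T).
  by have := tilable_cross j 0; rewrite translate0.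
apply: (@tilable_exact_cover _ _ _ pieces) => [B|f].
  rewrite !inE => /or4P[]/eqP->.
  - exact: (tilable_prodset_translate T _ x).
  - exact: tilable_prodset_T.
  - exact/tilable_prodset/tilable_cross.
  - exact: tilable_prodset.
rewrite /= daggerE Apow_S (Cie0_cross j) (CieS_cross j).
rewrite in_setD in_setU !in_prodset !in_setD.
rewrite (mem_cross j A) (mem_cross j Cu) (mem_cross j Tu) (mem_cross j T) (mem_cross j Cd).
move: (restr f) (f ord_max) => g a.
case: (boolP (g \in cross j setT)) => [/Apow_cross ->|_];
  rewrite /Cup /Cdown /Aset !in_setD !in_setI !in_setU /=;
  case: (g \in Apow T x e); case: (g j \in T); case: (g j \in Tu);
  case: (a \in T); by case: (a \in Tu).
Qed.

Lemma hole_dagger_Cie e i : (i <= e)%N -> hole (dagger T x (Apow T x e :\: Cie T x i e)).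
Proof.
case: i => [_|j je]; first exact: hole_dagger_Cie0.
exact: (hole_dagger_CieS (Ordinal je)).
Qed.

Lemma hole_subset e (X Y : {set point G e}) :
  X \subset Y -> hole Y -> tilable (Y :\: X) -> hole X.
Proof.
move=> XY [YA tY] tYX; split; first exact: subset_trans YA.
have -> : Apow T x e :\: X = (Apow T x e :\: Y) :|: (Y :\: X).
  apply/setP => f; rewrite !in_setU !in_setD.
  case: (boolP (f \in Y)) => [fY|fNY]; first by rewrite (subsetP YA _ fY) andbT.
  by rewrite (contraNN (subsetP XY f) fNY) andbF orbF.
apply: tilableU tY tYX; apply/pred0P => f /=; rewrite !in_setD.
by case: (f \in Y); rewrite ?andbF.
Qed.

Lemma dagger_subset e (X Y : {set point G e}) :
  X \subset Y -> dagger T x X \subset dagger T x Y.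
Proof.
move=> XY; rewrite !daggerE; apply: setSU; apply/subsetP => f.
by rewrite !in_prodset => /andP[/(subsetP XY) -> ->].
Qed.

Lemma dagger_setD e (X Y : {set point G e}) :
  X \subset Y -> dagger T x Y :\: dagger T x X = prodset (Y :\: X) Cd.
Proof.
move=> XY; apply/setP => f; rewrite !daggerE in_setD !in_setU !in_prodset in_setD.
move: (restr f) (f ord_max) => g a; rewrite /Cup /Cdown !in_setD.
case: (boolP (g \in X)) => [/(subsetP XY) ->|]; case: (g \in Y);
  case: (g \in Cie T x 0 e); case: (a \in T); by case: (a \in Tu).
Qed.

Lemma hole_dagger_setD_Cie e i (W : {set point G e}) : (i <= e)%N ->
  hole W -> Cie T x i e \subset W -> hole (dagger T x (W :\: Cie T x i e)).
Proof.
move=> ie [WA tW] CW; apply: (hole_subset _ (hole_dagger_Cie ie)).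
  by apply/dagger_subset/setSD.
rewrite dagger_setD ?setSD //; apply: tilable_prodset.
suff -> : (Apow T x e :\: Cie T x i e) :\: (W :\: Cie T x i e) = Apow T x e :\: W by [].
apply/setP => f; rewrite !in_setD.
by case: (boolP (f \in Cie T x i e)) => [/(subsetP CW) ->|]; rewrite ?andbF.
Qed.

Lemma dagger_setD_Cie e i (Y : {set point G e}) : (i <= e)%N ->
  dagger T x (Y :\: Cie T x i e) = dagger T x Y :\: Cie T x i e.+1.
Proof.
move=> ie; apply/setP => f; rewrite !daggerE (Cie_S ie) in_setD !in_setU !in_prodset in_setD.
move: (restr f) (f ord_max) => g a; rewrite /Cup /Cdown !in_setD.
case: (g \in Y); case: (g \in Cie T x i e); case: (g \in Cie T x 0 e);
  case: (a \in T); by case: (a \in Tu).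
Qed.

Lemma dagger_iter_setD_Cie d i k (Y : {set point G d}) : (i <= d)%N ->
  dagger_iter T x k (Y :\: Cie T x i d) = dagger_iter T x k Y :\: Cie T x i (k + d).
Proof.
move=> id; elim: k => [//|k IH] /=.
by rewrite IH dagger_setD_Cie // (leq_trans id (leq_addl _ _)).
Qed.

Lemma Cie_sub_dagger_iter d i k (Y : {set point G d}) : (i <= d)%N ->
  Cie T x i d \subset Y -> Cie T x i (k + d) \subset dagger_iter T x k Y.
Proof.
move=> id CY; elim: k => [//|k IH] /=.
rewrite (Cie_S (leq_trans id (leq_addl _ _))) daggerE; apply: subsetU; apply/orP; left.
by apply/subsetP => f; rewrite !in_prodset => /andP[/(subsetP IH) -> ->].
Qed.

Lemma disjoint_Cie e i j : i != j -> (i <= e)%N -> (j <= e)%N ->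
  [disjoint Cie T x i e & Cie T x j e].
Proof.
wlog j_gt0 : i j / (0 < j)%N.
  move=> wlog_j ij ie je; case: j ij je => [|j] ij je; last exact: wlog_j.
  by rewrite disjoint_sym wlog_j // ?lt0n // eq_sym.
case: j j_gt0 => // j _ ij ie je; apply/pred0P => f /=; apply/negP.
rewrite !inE => /andP[/forallP /(_ (Ordinal je)) + /forallP /(_ (Ordinal je))].
rewrite /= eqxx eq_sym (negbTE ij) /Cup /Cdown !inE.
by case/andP=> _ ->; case/andP.
Qed.

Lemma Cie_sub_setD_bigcup d i (s : seq nat) :
    (i <= d)%N -> i \notin s -> all (fun j => j <= d)%N s ->
  Cie T x i d \subset Apow T x d :\: \bigcup_(j <- s) Cie T x j d.
Proof.
move=> id i_notin_s s_le; apply/subsetP => f fCi.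
rewrite in_setD (subsetP (Cie_sub_Apow _ _) _ fCi) andbT.
rewrite big_seq; apply: (big_ind (fun B : {set _} => f \notin B)) => [|B1 B2|j js].
- by rewrite inE.
- by rewrite in_setU => /negbTE -> /negbTE ->.
- have ij : i != j by apply: contraNneq i_notin_s => ->.
  by rewrite (disjointFr (disjoint_Cie ij id (allP s_le j js)) fCi).
Qed.

End Holes.

Theorem corollary12 (G : finZmodType) (T : {set G}) (x : G)
  (hT0 : T != set0) (hTG : T \proper [set: G]) (hx : Tup T x != T)
  (d : nat) (hd : (1 <= d)%N) (s : seq nat)
  (hs_uniq : uniq s) (hs_le : all (fun i => (i <= d)%N) s) :
  hole T x
    (dagger_iter T x (size s)
       (Apow T x d :\: \bigcup_(i <- s) Cie T x i d)).
Proof.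
clear hT0 hTG hx hd.
elim: s hs_uniq hs_le => [_ _|i s IH /andP[i_notin_s s_uniq] /andP[id s_le]] /=.
  rewrite big_nil setD0; split=> //; rewrite setDv; exact: tilable_set0.
rewrite big_cons setUC -setDDl dagger_iter_setD_Cie //.
apply: hole_dagger_setD_Cie; [exact: leq_trans id (leq_addl _ _) | exact: IH |].
exact/Cie_sub_dagger_iter/Cie_sub_setD_bigcup.
Qed.
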